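(* In any execution of the algorithm described in the context on a camera object $S$ and an associated versioned CAS object $O$: (1) before initTS is called on a VNode, $\mathit{VHead}$ has contained a pointer to that VNode; (2) after a complete execution of initTS on some VNode, that VNode's timestamp is valid.
   Context: Camera $S$ has an integer field timestamp, initially 0; takeSnapshot(): read $t:=S.\mathit{timestamp}$, perform CAS$(S.\mathit{timestamp},t,t+1)$, return $t$. A VNode has fields val and nextv (both immutable after creation) and ts (an integer or special value TBD, initially TBD). Versioned CAS object $O$ has a field $\mathit{VHead}$. Constructor with value $v$: $\mathit{VHead}:=$ new VNode(val $v$, nextv NULL); initTS($\mathit{VHead}$). initTS($n$): if $n.ts=$TBD, read $c:=S.\mathit{timestamp}$ and CAS$(n.ts,\mathrm{TBD},c)$. readSnapshot($ts$): $node:=\mathit{VHead}$; initTS($node$); while $node.ts>ts$, $node:=node.nextv$; return $node.val$. vRead(): $h:=\mathit{VHead}$; initTS($h$); return $h.val$. vCAS(oldV,newV): $h:=\mathit{VHead}$; initTS($h$); if $h.val\neq$ oldV return false; if newV $=$ oldV return true; $m:=$ new VNode(val newV, nextv $h$); if CAS$(\mathit{VHead},h,m)$ succeeds, initTS($m$) and return true; else delete $m$, call initTS on the current value of $\mathit{VHead}$, return false. A VNode's timestamp is valid in a configuration if its ts field is not TBD there, and invalid otherwise. *)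

(* Operational model of the camera object S and the versioned
   CAS object O, executed by an unbounded set of asynchronous processes
   (identified by nat) whose atomic shared-memory steps are interleaved
   arbitrarily.  Values stored in O are naturals; VNodes are identified by
   naturals (fresh identifiers, never reused); a ts field equal to [None]
   means TBD. *)
From Stdlib Require Import Arith.

Record VNode := mkVNode { val : nat; nextv : option nat; ts : option nat }.

(* What a process does after returning from a call to initTS. *)
Inductive Cont :=
| KCtor
| KRead (t : nat) (node : nat)           (* readSnapshot(t): enter the while loop at node *)
| KVRead
| KVCAS (h oldV newV : nat)              (* vCAS: continue with the comparisons *)
| KRetTrue                               (* vCAS after successful CAS: return true *)
| KFailRet.                              (* vCAS after failed CAS: return false *)

Inductive PC :=
| Idle
| TS_Read
| TS_CAS (t : nat)
| Ctor_Alloc (v : nat)          (* VHead := new VNode(v, NULL) *)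
| Ctor_ReadHead                 (* read VHead, call initTS on it *)
| RS_ReadHead (t : nat)
| RS_Loop (t : nat) (node : nat)
| VR_ReadHead
| VC_ReadHead (oldV newV : nat)
| VC_Check (h oldV newV : nat)
| VC_CAS (h m : nat)
| VC_FailRead
(* initTS(n), followed by continuation k *)
| IT_Check (n : nat) (k : Cont)
| IT_ReadTS (n : nat) (k : Cont)
| IT_CAS (n : nat) (c : nat) (k : Cont).

Inductive CtorStatus := CtorNotStarted | CtorRunning | CtorDone.

Record Config := mkConfig {
  timestamp : nat;
  vhead : option nat;              (* O.VHead (None before construction) *)
  heap : nat -> option VNode;
  next_id : nat;
  ctor : CtorStatus;
  pcs : nat -> PC
}.

Definition init_config : Config :=
  mkConfig 0 None (fun _ => None) 0 CtorNotStarted (fun _ => Idle).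

Definition upd {A} (f : nat -> A) (x : nat) (a : A) : nat -> A :=
  fun y => if Nat.eqb y x then a else f y.

Definition set_pc (C : Config) (p : nat) (pc : PC) : Config :=
  mkConfig (timestamp C) (vhead C) (heap C) (next_id C) (ctor C) (upd (pcs C) p pc).
Definition set_ts (C : Config) (t : nat) : Config :=
  mkConfig t (vhead C) (heap C) (next_id C) (ctor C) (pcs C).
Definition set_vhead (C : Config) (h : option nat) : Config :=
  mkConfig (timestamp C) h (heap C) (next_id C) (ctor C) (pcs C).
Definition set_heap (C : Config) (x : nat) (o : option VNode) : Config :=
  mkConfig (timestamp C) (vhead C) (upd (heap C) x o) (next_id C) (ctor C) (pcs C).
Definition alloc (C : Config) (nd : VNode) : Config :=
  mkConfig (timestamp C) (vhead C) (upd (heap C) (next_id C) (Some nd))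
           (S (next_id C)) (ctor C) (pcs C).
Definition set_ctor (C : Config) (s : CtorStatus) : Config :=
  mkConfig (timestamp C) (vhead C) (heap C) (next_id C) s (pcs C).

Definition resume (C : Config) (p : nat) (k : Cont) : Config :=
  match k with
  | KCtor => set_ctor (set_pc C p Idle) CtorDone
  | KRead t node => set_pc C p (RS_Loop t node)
  | KVRead => set_pc C p Idle
  | KVCAS h o n => set_pc C p (VC_Check h o n)
  | KRetTrue => set_pc C p Idle
  | KFailRet => set_pc C p Idle
  end.

(* "node.ts > t" ; a TBD timestamp is treated as not greater. *)
Definition ts_gt (o : option nat) (t : nat) : bool :=
  match o with Some u => Nat.ltb t u | None => false end.

Inductive step (p : nat) : Config -> Config -> Prop :=
| st_inv_ctor C v : pcs C p = Idle -> ctor C = CtorNotStarted ->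
    step p C (set_ctor (set_pc C p (Ctor_Alloc v)) CtorRunning)
| st_inv_ts C : pcs C p = Idle -> step p C (set_pc C p TS_Read)
| st_inv_rs C t : pcs C p = Idle -> ctor C = CtorDone ->
    step p C (set_pc C p (RS_ReadHead t))
| st_inv_vr C : pcs C p = Idle -> ctor C = CtorDone ->
    step p C (set_pc C p VR_ReadHead)
| st_inv_vc C o n : pcs C p = Idle -> ctor C = CtorDone ->
    step p C (set_pc C p (VC_ReadHead o n))
| st_ts_read C : pcs C p = TS_Read ->
    step p C (set_pc C p (TS_CAS (timestamp C)))
| st_ts_cas_ok C t : pcs C p = TS_CAS t -> timestamp C = t ->
    step p C (set_pc (set_ts C (S t)) p Idle)
| st_ts_cas_fail C t : pcs C p = TS_CAS t -> timestamp C <> t ->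
    step p C (set_pc C p Idle)
| st_ctor_alloc C v : pcs C p = Ctor_Alloc v ->
    step p C (set_pc (set_vhead (alloc C (mkVNode v None None)) (Some (next_id C)))
                     p Ctor_ReadHead)
| st_ctor_read C h : pcs C p = Ctor_ReadHead -> vhead C = Some h ->
    step p C (set_pc C p (IT_Check h KCtor))
| st_rs_read C t h : pcs C p = RS_ReadHead t -> vhead C = Some h ->
    step p C (set_pc C p (IT_Check h (KRead t h)))
| st_rs_next C t node nd m : pcs C p = RS_Loop t node -> heap C node = Some nd ->
    ts_gt (ts nd) t = true -> nextv nd = Some m ->
    step p C (set_pc C p (RS_Loop t m))
| st_rs_ret C t node nd : pcs C p = RS_Loop t node -> heap C node = Some nd ->
    ts_gt (ts nd) t = false ->
    step p C (set_pc C p Idle)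
| st_vr_read C h : pcs C p = VR_ReadHead -> vhead C = Some h ->
    step p C (set_pc C p (IT_Check h KVRead))
| st_vc_read C o n h : pcs C p = VC_ReadHead o n -> vhead C = Some h ->
    step p C (set_pc C p (IT_Check h (KVCAS h o n)))
| st_vc_neq C h o n nd : pcs C p = VC_Check h o n -> heap C h = Some nd ->
    val nd <> o -> step p C (set_pc C p Idle)
| st_vc_same C h o n nd : pcs C p = VC_Check h o n -> heap C h = Some nd ->
    val nd = o -> n = o -> step p C (set_pc C p Idle)
| st_vc_alloc C h o n nd : pcs C p = VC_Check h o n -> heap C h = Some nd ->
    val nd = o -> n <> o ->
    step p C (set_pc (alloc C (mkVNode n (Some h) None)) p (VC_CAS h (next_id C)))
| st_vc_cas_ok C h m : pcs C p = VC_CAS h m -> vhead C = Some h ->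
    step p C (set_pc (set_vhead C (Some m)) p (IT_Check m KRetTrue))
| st_vc_cas_fail C h m : pcs C p = VC_CAS h m -> vhead C <> Some h ->
    step p C (set_pc (set_heap C m None) p VC_FailRead)
| st_vc_failread C h : pcs C p = VC_FailRead -> vhead C = Some h ->
    step p C (set_pc C p (IT_Check h KFailRet))
| st_it_valid C n k nd c : pcs C p = IT_Check n k -> heap C n = Some nd ->
    ts nd = Some c -> step p C (resume C p k)
| st_it_tbd C n k nd : pcs C p = IT_Check n k -> heap C n = Some nd ->
    ts nd = None -> step p C (set_pc C p (IT_ReadTS n k))
| st_it_read C n k : pcs C p = IT_ReadTS n k ->
    step p C (set_pc C p (IT_CAS n (timestamp C) k))
| st_it_cas_ok C n c k nd : pcs C p = IT_CAS n c k -> heap C n = Some nd ->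
    ts nd = None ->
    step p (C) (resume (set_heap C n (Some (mkVNode (val nd) (nextv nd) (Some c)))) p k)
| st_it_cas_fail C n c k nd c' : pcs C p = IT_CAS n c k -> heap C n = Some nd ->
    ts nd = Some c' -> step p C (resume C p k).

Definition execution (E : nat -> Config) (len : nat) : Prop :=
  E 0 = init_config /\ forall i, i < len -> exists p, step p (E i) (E (S i)).

Definition in_initTS (pc : PC) (n : nat) : Prop :=
  match pc with
  | IT_Check m _ | IT_ReadTS m _ | IT_CAS m _ _ => m = n
  | _ => False
  end.

Definition ts_valid (C : Config) (n : nat) : Prop :=
  exists nd c, heap C n = Some nd /\ ts nd = Some c.

From Stdlib Require Import Arith Lia.

(* For (1): a process
   enters initTS(n) only with an n it has just read from VHead or has just
   installed in VHead.  For (2): initTS returns only after observing or writing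
   a non-TBD timestamp, and a valid timestamp is never lost.  Indeed ts fields
   are written only by a CAS from TBD, allocation uses never-used identifiers,
   and the only deletion, of the node m of a failed vCAS, hits a node that was
   never published in VHead, so no initTS ever ran on m and its ts is still
   TBD.  These facts about pending vCAS nodes, together with the freshness of
   identifiers, form an inductive invariant of executions. *)

Lemma pcs_step_other q C C' p : step q C C' -> p <> q -> pcs C' p = pcs C p.
Proof.
  intros Hs Hne. apply Nat.eqb_neq in Hne.
  destruct Hs; try destruct k; cbn; unfold upd; rewrite Hne; reflexivity.
Qed.

Ltac case_upd :=
  repeat match goal with
  | _ : context [Nat.eqb ?a ?b] |- _ => destruct (Nat.eqb_spec a b)
  | |- context [Nat.eqb ?a ?b] => destruct (Nat.eqb_spec a b)
  end; subst.

Lemma next_id_step_le q C C' : step q C C' -> next_id C <= next_id C'.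
Proof. intros Hs; destruct Hs; try destruct k; cbn; lia. Qed.

Definition allocates (C C' : Config) (x : nat) : Prop :=
  x = next_id C /\ next_id C' = S x.

Lemma ts_tbd_not_valid C n nd : heap C n = Some nd -> ts nd = None -> ~ ts_valid C n.
Proof. intros Hn Ht (nd' & c & Hn' & Ht'); congruence. Qed.

Lemma vhead_step_source q C C' : step q C C' ->
  vhead C' = vhead C \/
  (exists x, allocates C C' x /\ vhead C' = Some x) \/
  (exists h m, pcs C q = VC_CAS h m /\ vhead C' = Some m).
Proof.
  intros Hs; destruct Hs; try destruct k; cbn; auto.
  - right; left; exists (next_id C); repeat split.
  - right; right; eauto.
Qed.

Lemma heap_step_source q C C' x : step q C C' ->
  heap C' x = heap C x \/ allocates C C' x \/ (in_initTS (pcs C q) x /\ ~ ts_valid C x) \/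
  (exists h, pcs C q = VC_CAS h x).
Proof.
  intros Hs.
  destruct Hs; try destruct k; cbn; unfold upd; case_upd; auto.
  all: first [ right; left; split; reflexivity | right; right; right; solve [eauto]
             | right; right; left; split; [rewrite H; reflexivity | eapply ts_tbd_not_valid; eauto] ].
Qed.

Lemma ts_valid_step_source q C C' x : step q C C' -> ts_valid C' x ->
  ts_valid C x \/ in_initTS (pcs C q) x.
Proof.
  intros Hs (nd & c & Hx & Hc).
  destruct Hs; try destruct k; cbn in *; unfold upd in *; case_upd;
   try solve [left; exists nd, c; auto]; try (right; rewrite H; reflexivity); try congruence.
  all: injection Hx as <-; discriminate.
Qed.

Lemma in_initTS_step_source q C C' p n : step q C C' -> in_initTS (pcs C' p) n ->
  in_initTS (pcs C p) n \/ vhead C = Some n \/ vhead C' = Some n.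
Proof.
  intros Hs Hn.
  destruct Hs; try destruct k; cbn in *; unfold upd in *; case_upd; cbn in *;
    try contradiction; subst; auto; left; rewrite H; reflexivity.
Qed.

Lemma pending_step_source q C C' p h m : step q C C' -> pcs C' p = VC_CAS h m ->
  (p <> q /\ pcs C p = VC_CAS h m) \/
  (p = q /\ allocates C C' m /\ vhead C' = vhead C).
Proof.
  intros Hs Hp.
  destruct Hs; try destruct k; cbn in *; unfold upd in *; case_upd;
    try discriminate; auto.
  injection Hp as <- <-; right; repeat split.
Qed.

Lemma initTS_return_ts_valid q C C' p n : step q C C' ->
  in_initTS (pcs C p) n -> ~ in_initTS (pcs C' p) n -> ts_valid C' n.
Proof.
  intros Hs Hin Hout.
  destruct (Nat.eq_dec p q) as [->|Hne].
  2:{ rewrite (pcs_step_other q C C' p Hs Hne) in Hout; contradiction. }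
  destruct Hs; try destruct k; cbn in *; unfold upd in *; case_upd;
    rewrite H in Hin; cbn in *; subst; try contradiction.
  all: unfold ts_valid; cbn; unfold upd; rewrite ?Nat.eqb_refl;
    do 2 eexists; split; (eassumption || reflexivity).
Qed.

Record unpublished (C : Config) (q m : nat) : Prop := {
  unpublished_allocated : m < next_id C;
  unpublished_not_head : vhead C <> Some m;
  unpublished_tbd : ~ ts_valid C m;
  unpublished_owner : forall q' h', pcs C q' = VC_CAS h' m -> q' = q;
  unpublished_no_initTS : forall q', ~ in_initTS (pcs C q') m
}.

Record wf_config (C : Config) : Prop := {
  wf_fresh : forall x, next_id C <= x -> heap C x = None;
  wf_vhead : forall h, vhead C = Some h -> h < next_id C;
  wf_initTS : forall q n, in_initTS (pcs C q) n -> n < next_id C;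
  wf_pending : forall q h m, pcs C q = VC_CAS h m -> unpublished C q m
}.

Lemma wf_init : wf_config init_config.
Proof. split; cbn; intros; first [reflexivity | discriminate | contradiction]. Qed.

Section StepPreservesWf.

Variables (q : nat) (C C' : Config).
Hypotheses (HC : wf_config C) (Hs : step q C C').

(* Never named below: [lia] picks it up from the context. *)
Let next_id_mono := next_id_step_le q C C' Hs.

Lemma wf_fresh_step x : next_id C' <= x -> heap C' x = None.
Proof.
  intros Hx.
  destruct (heap_step_source q C C' x Hs) as [-> | [[-> Hn] | [[Hi _] | [h Hp]]]].
  - apply (wf_fresh C HC); lia.
  - lia.
  - apply (wf_initTS C HC) in Hi; lia.
  - apply (wf_pending C HC) in Hp; destruct Hp; lia.
Qed.

Lemma wf_vhead_step h : vhead C' = Some h -> h < next_id C'.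
Proof.
  intros Hh.
  destruct (vhead_step_source q C C' Hs) as [He | [[x [[-> Hn] Hx]] | (h' & m & Hp & Hm)]].
  - rewrite He in Hh; apply (wf_vhead C HC) in Hh; lia.
  - rewrite Hx in Hh; injection Hh as <-; lia.
  - rewrite Hm in Hh; injection Hh as <-.
    apply (wf_pending C HC) in Hp; destruct Hp; lia.
Qed.

Lemma wf_initTS_step p n : in_initTS (pcs C' p) n -> n < next_id C'.
Proof.
  intros Hn.
  destruct (in_initTS_step_source q C C' p n Hs Hn) as [Hi | [Hh | Hh]].
  - apply (wf_initTS C HC) in Hi; lia.
  - apply (wf_vhead C HC) in Hh; lia.
  - exact (wf_vhead_step n Hh).
Qed.

Lemma unpublished_step_other p h m : p <> q -> pcs C p = VC_CAS h m ->
  unpublished C' p m.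
Proof.
  intros Hne Hp.
  destruct (wf_pending C HC p h m Hp) as [Hlt Hhead Htbd Howner Hinit].
  assert (Hhead' : vhead C' <> Some m).
  { intros Hm.
    destruct (vhead_step_source q C C' Hs) as [He | [[x [[-> _] Hx]] | (h' & m' & Hq & Hm')]].
    - congruence.
    - rewrite Hx in Hm; injection Hm as Hm; lia.
    - rewrite Hm' in Hm; injection Hm as ->.
      apply Hne; symmetry; exact (Howner q h' Hq). }
  split.
  - lia.
  - exact Hhead'.
  - intros Hv; destruct (ts_valid_step_source q C C' m Hs Hv) as [Hv0 | Hi].
    + exact (Htbd Hv0).
    + exact (Hinit q Hi).
  - intros q' h' Hq'.
    destruct (pending_step_source q C C' q' h' m Hs Hq') as [[_ Hq0] | (_ & [-> _] & _)].
    + exact (Howner q' h' Hq0).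
    + lia.
  - intros q' Hi.
    destruct (in_initTS_step_source q C C' q' m Hs Hi) as [Hi0 | [Hm | Hm]].
    + exact (Hinit q' Hi0).
    + exact (Hhead Hm).
    + exact (Hhead' Hm).
Qed.

Lemma unpublished_step_alloc h m : pcs C' q = VC_CAS h m ->
  allocates C C' m -> vhead C' = vhead C -> unpublished C' q m.
Proof.
  intros Hq [Hm Hn] Hv; subst m.
  assert (Hhead' : vhead C' <> Some (next_id C)).
  { rewrite Hv; intros Hh; apply (wf_vhead C HC) in Hh; lia. }
  split.
  - lia.
  - exact Hhead'.
  - intros Hval; destruct (ts_valid_step_source q C C' _ Hs Hval) as [(nd & c & Hnd & _) | Hi].
    + rewrite (wf_fresh C HC) in Hnd; [discriminate | lia].
    + apply (wf_initTS C HC) in Hi; lia.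
  - intros q' h' Hq'.
    destruct (pending_step_source q C C' q' h' _ Hs Hq') as [[_ Hq0] | [-> _]].
    + apply (wf_pending C HC) in Hq0; destruct Hq0; lia.
    + reflexivity.
  - intros q' Hi.
    destruct (in_initTS_step_source q C C' q' _ Hs Hi) as [Hi0 | [Hh | Hh]].
    + apply (wf_initTS C HC) in Hi0; lia.
    + apply (wf_vhead C HC) in Hh; lia.
    + exact (Hhead' Hh).
Qed.

Lemma wf_config_step : wf_config C'.
Proof.
  split.
  - exact wf_fresh_step.
  - exact wf_vhead_step.
  - exact wf_initTS_step.
  - intros p h m Hp.
    destruct (pending_step_source q C C' p h m Hs Hp) as [[Hne Hp0] | (-> & Ha & Hv)].
    + exact (unpublished_step_other p h m Hne Hp0).
    + exact (unpublished_step_alloc h m Hp Ha Hv).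
Qed.

Lemma ts_valid_step n : ts_valid C n -> ts_valid C' n.
Proof.
  intros Hv.
  destruct (heap_step_source q C C' n Hs) as [He | [[-> _] | [[_ Htbd] | [h Hp]]]].
  - destruct Hv as (nd & c & Hn & Hc); exists nd, c; rewrite He; auto.
  - destruct Hv as (nd & c & Hn & _); rewrite (wf_fresh C HC) in Hn; [discriminate | lia].
  - contradiction.
  - apply (wf_pending C HC) in Hp; destruct Hp; contradiction.
Qed.

End StepPreservesWf.

Section Execution.

Variables (E : nat -> Config) (len : nat).
Hypothesis HE : execution E len.

Lemma execution_step i : i < len -> exists q, step q (E i) (E (S i)).
Proof. exact (proj2 HE i). Qed.

Lemma execution_wf i : i <= len -> wf_config (E i).
Proof.
  induction i as [|i IH]; intros Hi.
  - rewrite (proj1 HE); exact wf_init.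
  - destruct (execution_step i) as [q Hq]; [lia|].
    exact (wf_config_step q _ _ (IH ltac:(lia)) Hq).
Qed.

Lemma execution_initTS_vhead_before i p n : i <= len -> in_initTS (pcs (E i) p) n ->
  exists j, j <= i /\ vhead (E j) = Some n.
Proof.
  revert p n; induction i as [|i IH]; intros p n Hi Hn.
  - rewrite (proj1 HE) in Hn; contradiction.
  - destruct (execution_step i) as [q Hq]; [lia|].
    destruct (in_initTS_step_source q _ _ p n Hq Hn) as [Hn0 | [Hv | Hv]].
    + destruct (IH p n ltac:(lia) Hn0) as (j & Hj & Hv); exists j; split; [lia | exact Hv].
    + exists i; split; [lia | exact Hv].
    + exists (S i); split; [lia | exact Hv].
Qed.

Lemma execution_ts_valid_persists i j n : i <= j -> j <= len ->
  ts_valid (E i) n -> ts_valid (E j) n.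
Proof.
  intros Hij; induction Hij as [|j Hij IH]; intros Hj Hv; [exact Hv|].
  destruct (execution_step j) as [q Hq]; [lia|].
  exact (ts_valid_step q _ _ (execution_wf j ltac:(lia)) Hq n (IH ltac:(lia) Hv)).
Qed.

End Execution.

Theorem lemmaA2 (E : nat -> Config) (len : nat) :
  execution E len ->
  (* (1) when initTS is called on VNode n (and throughout that call),
         VHead has already contained a pointer to n *)
  (forall i p n, i <= len -> in_initTS (pcs (E i) p) n ->
     exists j, j <= i /\ vhead (E j) = Some n) /\
  (* (2) once a call initTS(n) by process p completes (step i -> i+1),
         n's timestamp is valid in every later configuration *)
  (forall i p n, i < len -> in_initTS (pcs (E i) p) n ->
     ~ in_initTS (pcs (E (S i)) p) n ->
     forall j, S i <= j -> j <= len -> ts_valid (E j) n).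
Proof.
  intros HE; split.
  - exact (execution_initTS_vhead_before E len HE).
  - intros i p n Hi Hin Hout j Hij Hj.
    destruct (execution_step E len HE i Hi) as [q Hq].
    apply (execution_ts_valid_persists E len HE (S i) j n Hij Hj).
    exact (initTS_return_ts_valid q _ _ p n Hq Hin Hout).
Qed.
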